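(* Let $K\subset\mathbb{R}^d$ be an OU set about $x_0\in\mathbb{R}^d$ (in the sense of sets in $\mathbb{R}^d$). Then $K$ is Lebesgue measurable, $\bar K$ and $\overline{K^\circ}$ are OU sets about $x_0$, and $\lambda(K^\circ)=\lambda(K)=\lambda(\bar K)$.
   Context: A set $K\subset\mathbb{R}^d$ is OU about $x_0=(x_{10},\dots,x_{d0})$ if for every $x\in K$ the closed rectangle with edges parallel to the axes and opposite vertices $x_0$ and $x$ lies in $K$, i.e. $(\eta_1x_1+(1-\eta_1)x_{10},\dots,\eta_dx_d+(1-\eta_d)x_{d0})\in K$ for all $\eta_i\in[0,1]$. $\lambda$ is Lebesgue measure; $K^\circ$, $\bar K$ denote interior and closure. *)

(* R^d is modelled as row vectors 'rV[R]_d with the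
   product (matrix) topology; d-dimensional Lebesgue (outer) measure is defined
   below via countable covers by boxes, and Lebesgue measurability is
   Caratheodory measurability w.r.t. this outer measure. *)
From HB Require Import structures.
From mathcomp Require Import all_boot all_order all_algebra.
From mathcomp Require Import all_classical all_reals all_analysis.
Set Implicit Arguments. Unset Strict Implicit. Unset Printing Implicit Defensive.
Import Order.TTheory GRing.Theory Num.Theory.
Import numFieldNormedType.Exports.
Local Open Scope classical_set_scope.
Local Open Scope ring_scope.

Definition box (R : realType) (d : nat) (a b : 'I_d -> R) : set 'rV[R]_d :=
  [set x | forall i : 'I_d, a i <= x ord0 i < b i].

Definition box_vol (R : realType) (d : nat) (a b : 'I_d -> R) : \bar R :=
  (\prod_(i < d) Num.max (b i - a i) 0)%:E.

Definition lebesgue_outer (R : realType) (d : nat) (A : set 'rV[R]_d) : \bar R :=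
  ereal_inf [set s : \bar R | exists a b : nat -> 'I_d -> R,
     A `<=` \bigcup_k box (a k) (b k) /\
     s = (\sum_(k <oo) box_vol (a k) (b k))%E].

Definition lebesgue_measurable (R : realType) (d : nat) (A : set 'rV[R]_d) : Prop :=
  caratheodory_measurable (@lebesgue_outer R d) A.

(* K is OU about x0: for every x in K, the closed axis-parallel rectangle with
   opposite vertices x0 and x lies in K *)
Definition OU (R : realType) (d : nat) (K : set 'rV[R]_d) (x0 : 'rV[R]_d) : Prop :=
  forall x, K x -> forall eta : 'I_d -> R, (forall i, 0 <= eta i <= 1) ->
    K (\row_i (eta i * x ord0 i + (1 - eta i) * x0 ord0 i)).

(* Let [L] be OU about [x0] and [p] a point of its closure that lies on none of
   the coordinate hyperplanes through [x0].  A point [y] of [L] close enough to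
   [p] spans a rectangle with [x0] that contains a whole neighbourhood of
   [x0 + r (p - x0)] for any fixed [r < 1]; so shrinking towards [x0] maps the
   closure of [L] into its interior, up to a union of hyperplanes, which is
   null.  Since a dilation by [s] multiplies outer measure by at most [s^d],
   letting [s] decrease to [1] gives [λ(closure L) <= λ(interior L)].
   Applied to the bounded OU sets [K ∩ cube], this makes [K \ interior K] null,
   so [K] is the union of an open set and a null set, hence measurable.
   Closures inherit the OU property because rectangles with strictly positive
   weights, which also preserve interiors, approximate all rectangles. *)

From HB Require Import structures.
From mathcomp Require Import all_boot all_order all_algebra.
From mathcomp Require Import all_classical all_reals all_analysis.
From mathcomp Require Import ring lra.
Import Order.TTheory GRing.Theory Num.Theory.
Import numFieldNormedType.Exports.
Local Open Scope classical_set_scope.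
Local Open Scope ring_scope.

Set Implicit Arguments. Unset Strict Implicit. Unset Printing Implicit Defensive.

Section OuterMeasure.
Variables (R : realType) (d : nat).
Local Notation V := 'rV[R]_d.
Local Notation lo := (@lebesgue_outer R d).
Local Open Scope ereal_scope.

Lemma box_vol_ge0 (a b : 'I_d -> R) : 0 <= box_vol a b.
Proof.
rewrite /box_vol lee_fin; apply: prodr_ge0 => i _.
by rewrite le_max lexx orbT.
Qed.

Lemma lebesgue_outer_ge0 (A : set V) : 0 <= lo A.
Proof.
apply: le_ereal_inf_tmp => _ [a [b [_ ->]]].
by apply: nneseries_ge0 => k _ _; exact: box_vol_ge0.
Qed.

Lemma le_lebesgue_outer (A B : set V) : A `<=` B -> lo A <= lo B.
Proof.
move=> AB; apply: ereal_inf_le_tmp => _ [a [b [Bcov ->]]].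
by exists a, b; split => //; exact: subset_trans Bcov.
Qed.

Lemma lebesgue_outer_cover_approx (A : set V) (e : R) : (0 < e)%R -> lo A < +oo ->
  exists a b : nat -> 'I_d -> R, A `<=` \bigcup_k box (a k) (b k) /\
    \sum_(k <oo) box_vol (a k) (b k) <= lo A + e%:E.
Proof.
move=> e0 Aoo; have Afin : lo A \is a fin_num.
  by rewrite ge0_fin_numE ?lebesgue_outer_ge0.
have [_ [a [b [Acov ->]]] /ltW le_e] := lb_ereal_inf_adherent e0 Afin.
by exists a, b.
Qed.

Lemma lebesgue_outer_bigcup_le (A : nat -> set V) (a b : nat -> nat -> 'I_d -> R) :
  (forall i, A i `<=` \bigcup_j box (a i j) (b i j)) ->
  lo (\bigcup_i A i) <= \sum_(i <oo) \sum_(j <oo) box_vol (a i j) (b i j).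
Proof.
move=> Acov; pose vol2 (p : nat * nat) := box_vol (a p.1 p.2) (b p.1 p.2).
have vol2_ge0 p : 0 <= vol2 p by exact: box_vol_ge0.
apply: (@le_trans _ _ (\esum_(p in setT) vol2 p)).
  have /card_esym/ppcard_eqP[f] := card_nat2.
  apply: ereal_inf_lbound => /=.
  exists (fun k => a (f k).1 (f k).2), (fun k => b (f k).1 (f k).2); split.
    move=> x [i _ /Acov [j _ xij]]; exists (f^-1%FUN (i, j)) => //=.
    by rewrite invK ?inE.
  rewrite -(esum_pred_image vol2 _ xpredT) ?[fun=> _]set_true//.
  congr esum; apply/seteqP; split=> [[i j] _|//].
  by exists (f^-1%FUN (i, j)) => //; rewrite invK ?inE.
suff -> : \esum_(p in setT) vol2 p = \sum_(i <oo) \sum_(j <oo) vol2 (i, j) by [].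
pose J i : set (nat * nat) := [set (i, j) | j in setT].
have -> : setT = \bigcup_i J i.
  by rewrite predeqE => -[i j]; split => // _; exists i => //; exists j.
rewrite esum_bigcupT /=; last 2 first.
- apply/trivIsetP => i j _ _ ij.
  rewrite predeqE => -[i' j'] /=; split => //= -[] [_] _ [<-{i'} _].
  by move=> [k _] [] /esym/eqP; rewrite (negbTE ij).
- by move=> p; exact: vol2_ge0.
rewrite -(image_id [set: nat]) -fun_true esum_pred_image//; last first.
  by move=> i _; exact: esum_ge0.
apply: eq_eseriesr => /= i _.
rewrite -(esum_pred_image vol2 (pair i) predT)//=; last first.
  by move=> ? ? _ _; exact: (@can_inj _ _ _ snd).
by congr esum; rewrite predeqE => -[i' j]; split; move=> [k _ <-]; exists k.
Qed.

Lemma lebesgue_outer_sigma_subadditive : sigma_subadditive lo.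
Proof.
move=> A; have [[i Aioo]|] := pselect (exists i, lo (A i) = +oo).
  rewrite (eseries_pinfty _ _ Aioo) ?leey// => k _.
  by rewrite -ltNye (lt_le_trans _ (lebesgue_outer_ge0 _)).
rewrite -forallNE => Afin.
apply/lee_addgt0Pr => e e0.
have cover i : exists ab : (nat -> 'I_d -> R) * (nat -> 'I_d -> R),
    A i `<=` \bigcup_k box (ab.1 k) (ab.2 k) /\
    \sum_(k <oo) box_vol (ab.1 k) (ab.2 k) <= lo (A i) + (e / (2 ^ i.+1)%:R)%:E.
  have [||a [b ab]] := @lebesgue_outer_cover_approx (A i) (e / (2 ^ i.+1)%:R).
  - by rewrite divr_gt0.
  - by rewrite ltey; apply/eqP; exact: Afin.
  by exists (a, b).
have [G PG] := choice cover.
apply: le_trans (lebesgue_outer_bigcup_le (fun i => (PG i).1)) _.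
apply: le_trans (epsilon_trick _ _ _); last exact: ltW.
  apply: lee_nneseries => i _; last exact: (PG i).2.
  by move=> _; apply: nneseries_ge0 => *; exact: box_vol_ge0.
by move=> i; exact: lebesgue_outer_ge0.
Qed.

Lemma lebesgue_outer_bigcup_null (A : nat -> set V) :
  (forall m, lo (A m) = 0) -> lo (\bigcup_m A m) = 0.
Proof.
move=> A0; apply/eqP; rewrite eq_le lebesgue_outer_ge0 andbT.
apply: le_trans (lebesgue_outer_sigma_subadditive A) _.
by rewrite eseries0 // => m _ _; rewrite A0.
Qed.

End OuterMeasure.

Section RowVectors.
Variables (R : realType) (d : nat).
Local Notation V := 'rV[R]_d.
Local Notation lo := (@lebesgue_outer R d).

Definition cube (c : V) (m : nat) : set V :=
  [set x | forall i, `|x ord0 i - c ord0 i| < m%:R].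

Lemma cube_cover (c x : V) : exists m, cube c m x.
Proof.
pose B := \sum_j `|x ord0 j - c ord0 j|.
exists (Num.trunc B).+1 => j; apply: le_lt_trans (truncnS_gt B).
rewrite /B (bigD1 j) //= lerDl; apply: sumr_ge0 => *; exact: normr_ge0.
Qed.

Lemma cube_sub_box (c : V) m :
  cube c m `<=` box (fun i => c ord0 i - m%:R) (fun i => c ord0 i + m%:R).
Proof.
move=> x xm i; have := xm i; rewrite ltr_norml => /andP[h1 h2].
by apply/andP; split; lra.
Qed.

Lemma ball_rowP (p y : V) (e : R) :
  ball p e y <-> 0 < e /\ forall j, `|p ord0 j - y ord0 j| < e.
Proof.
split=> -[e0 pey]; split=> //; first exact: pey.
by move=> i j; rewrite (ord1 i); exact: pey.
Qed.

Lemma near_row (y : V) (r : 'I_d -> R) : (forall i, 0 < r i) ->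
  \forall z \near y, forall i, `|(z : V) ord0 i - y ord0 i| < r i.
Proof.
move=> r0; apply: (@filter_forall _ _
  (fun i (z : V) => `|z ord0 i - y ord0 i| < r i) (nbhs y)) => i; apply/nbhs_ballP.
by exists (r i); [exact: r0|move=> z /ball_rowP[_ /(_ i)]; rewrite distrC].
Qed.

Lemma closure_cube (c : V) m : closure (cube c m) `<=` cube c m.+1.
Proof.
move=> p clp i; have [z [zm pz]] := clp _ (near_row p (fun=> ltr01)).
have := zm i; have := pz i; rewrite -natr1 !ltr_norml => /andP[h1 h2] /andP[h3 h4].
by apply/andP; split; lra.
Qed.

Definition dilate (c : V) (s : R) (x : V) : V := c + s *: (x - c).

Lemma lebesgue_outer_dilate_le (c : V) (s : R) (A : set V) : 0 < s ->
  (lo (dilate c s @` A) <= (s ^+ d)%:E * lo A)%E.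
Proof.
move=> s0; rewrite /lebesgue_outer -ereal_inf_pZl ?exprn_gt0 //.
apply: le_ereal_inf_tmp => _ [_ [a [b [Acov ->]]] <-].
apply: ereal_inf_lbound.
exists (fun k i => c ord0 i + s * (a k i - c ord0 i)),
       (fun k i => c ord0 i + s * (b k i - c ord0 i)); split.
  move=> _ [x Ax <-]; have [k _ xk] := Acov x Ax; exists k => // i; rewrite !mxE.
  have /andP[h1 h2] := xk i.
  by rewrite lerD2l ltrD2l ler_pM2l // ltr_pM2l // lerD2r ltrD2r h1 h2.
rewrite -nneseriesZl; last by move=> k _; exact: box_vol_ge0.
apply: eq_eseriesr => k _; rewrite /box_vol -EFinM; congr EFin.
rewrite [RHS](eq_bigr (fun i => s * Num.max (b k i - a k i) 0)).
  by rewrite big_split /= prodr_const card_ord.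
move=> i _; rewrite maxr_pMr ?ltW // mulr0; congr (Num.max _ 0); ring.
Qed.

End RowVectors.

Lemma interval_length_split (R : realFieldType) (a b c : R) :
  Num.max (Num.min b c - a) 0 + Num.max (b - Num.max a c) 0 = Num.max (b - a) 0.
Proof.
rewrite !minEle !maxEle; case: (leP b c) => h1; case: (leP a c) => h2.
all: repeat (case: ifPn; rewrite -?ltNge => ?).
all: lra.
Qed.

Section PositiveDimension.
Variables (R : realType) (n : nat).
Local Notation d := n.+1.
Local Notation V := 'rV[R]_d.
Local Notation lo := (@lebesgue_outer R d).
Local Open Scope ereal_scope.

Lemma box_vol_cst0 : box_vol (fun _ : 'I_d => 0%R : R) (fun _ => 0%R) = 0.
Proof. by rewrite /box_vol big_ord_recl subrr maxxx mul0r. Qed.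

Lemma lebesgue_outer_box_le (a b : 'I_d -> R) : lo (box a b) <= box_vol a b.
Proof.
apply: ereal_inf_lbound.
exists (fun k => if k is 0%N then a else (fun _ => 0%R)),
       (fun k => if k is 0%N then b else (fun _ => 0%R)); split.
  by move=> x bx; exists 0%N.
rewrite nneseries_recl //=; last by move=> k _; exact: box_vol_ge0.
by rewrite eseries0 ?adde0 // => -[|k]// _ _; exact: box_vol_cst0.
Qed.

Lemma lebesgue_outer0 : lo set0 = 0.
Proof.
apply/eqP; rewrite eq_le lebesgue_outer_ge0 andbT.
apply: ereal_inf_lbound; exists (fun _ _ => 0%R), (fun _ _ => 0%R); split => //.
by rewrite eseries0 // => k _ _; exact: box_vol_cst0.
Qed.

HB.instance Definition _ := isOuterMeasure.Build R V lo lebesgue_outer0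
  (@lebesgue_outer_ge0 R d) (@le_lebesgue_outer R d)
  (@lebesgue_outer_sigma_subadditive R d).

Lemma lebesgue_outerU2 (A B : set V) : lo (A `|` B) <= lo A + lo B.
Proof. exact: outer_measureU2. Qed.

Definition set_coord (f : 'I_d -> R) (i : 'I_d) (v : R) :=
  fun j => if j == i then v else f j.

Lemma box_vol_split (a b : 'I_d -> R) i c :
  box_vol a (set_coord b i (Num.min (b i) c)) +
  box_vol (set_coord a i (Num.max (a i) c)) b = box_vol a b.
Proof.
rewrite /box_vol -EFinD; congr EFin.
rewrite (bigD1 i) // [X in (_ + X)%R](bigD1 i) // [RHS](bigD1 i) //= /set_coord !eqxx.
rewrite (eq_bigr (fun j => Num.max (b j - a j) 0)%R); last by move=> j /negbTE ->.
rewrite [X in (_ + _ * X)%R](eq_bigr (fun j => Num.max (b j - a j) 0)%R).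
  by rewrite -mulrDl interval_length_split.
by move=> j /negbTE ->.
Qed.

Lemma caratheodory_halfspace i c : lo.-caratheodory [set x : V | (x ord0 i < c)%R].
Proof.
apply: le_caratheodory_measurable => X.
apply: le_ereal_inf_tmp => _ [a [b [Xcov ->]]].
rewrite -(eq_eseriesr (fun k _ => box_vol_split (a k) (b k) i c)).
rewrite nneseriesD; last 2 first.
- by move=> k _ _; exact: box_vol_ge0.
- by move=> k _ _; exact: box_vol_ge0.
apply: leeD; apply: ereal_inf_lbound.
- exists a, (fun k => set_coord (b k) i (Num.min (b k i) c)); split => //.
  move=> x [/Xcov [k _ xk] xc]; exists k => // j; rewrite /set_coord.
  case: eqP => [->|_]; last exact: xk.
  by have /andP[-> xb] := xk i; rewrite lt_min xb xc.
- exists (fun k => set_coord (a k) i (Num.max (a k i) c)), b; split => //.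
  move=> x [/Xcov [k _ xk] xc]; exists k => // j; rewrite /set_coord.
  case: eqP => [->|_]; last exact: xk.
  have /andP[ax ->] := xk i; rewrite ge_max ax andbT andTb.
  by rewrite leNgt; apply/negP => h; apply: xc.
Qed.

Lemma caratheodory_box (a b : 'I_d -> R) : lo.-caratheodory (box a b).
Proof.
suff cara_s (s : seq 'I_d) : lo.-caratheodory
    [set x : V | forall i, i \in s -> (a i <= x ord0 i < b i)%R].
  have -> : box a b = [set x : V | forall i, i \in enum 'I_d -> (a i <= x ord0 i < b i)%R].
    by apply/seteqP; split => x /= h i; [move=> _; exact: h|apply: h; rewrite mem_enum].
  exact: cara_s.
elim: s => [|i s IH].
  have -> : [set x : V | forall i, i \in [::] -> (a i <= x ord0 i < b i)%R] = ~` set0.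
    by apply/seteqP; split => x //= _ i.
  exact/caratheodory_measurable_setC/caratheodory_measurable_set0.
have -> : [set x : V | forall j, j \in i :: s -> (a j <= x ord0 j < b j)%R] =
   (~` [set x : V | (x ord0 i < a i)%R] `&` [set x : V | (x ord0 i < b i)%R]) `&`
   [set x : V | forall j, j \in s -> (a j <= x ord0 j < b j)%R].
  apply/seteqP; split => x /=.
    move=> h; have /andP[h1 h2] := h i (mem_head _ _).
    split; [split => //; apply/negP; rewrite -leNgt; exact: h1|].
    by move=> j js; apply: h; rewrite in_cons js orbT.
  move=> [[h1 h2] h] j; rewrite in_cons => /orP[/eqP ->|js]; last exact: h.
  by rewrite h2 andbT leNgt; apply/negP.
apply: caratheodory_measurable_setI; last exact: IH.
apply: caratheodory_measurable_setI; last exact: caratheodory_halfspace.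
exact/caratheodory_measurable_setC/caratheodory_halfspace.
Qed.

Lemma caratheodory_null (N : set V) : lo N = 0 -> lo.-caratheodory N.
Proof.
move=> N0; apply: le_caratheodory_measurable => X.
rewrite -[leRHS]add0e; apply: leeD; last by apply: le_lebesgue_outer; exact: subIsetl.
by rewrite -N0; apply: le_lebesgue_outer; exact: subIsetr.
Qed.

(* An open set is the union of the rational boxes it contains, enumerated via
   [unpickle]. *)
Lemma caratheodory_open (U : set V) : open U -> lo.-caratheodory U.
Proof.
move=> oU.
pose C := ({ffun 'I_d -> rat} * {ffun 'I_d -> rat})%type.
pose bx (p : C) : set V := box (fun i => ratr (p.1 i)) (fun i => ratr (p.2 i)).
pose B (k : nat) : set V := fun x => exists p : C,
  [/\ unpickle k = Some p, bx p `<=` U & bx p x].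
have -> : U = \bigcup_k B k.
  apply/seteqP; split; last by move=> x [k _ [p [_ pU px]]]; exact: pU.
  move=> x Ux; have /nbhs_ballP [e e0 eU] := oU x Ux.
  have ha (i : 'I_d) : exists q : rat, ratr q \in `](x ord0 i - e)%R, x ord0 i[.
    by apply: rat_in_itvoo; rewrite ltrBlDr ltrDl.
  have hb (i : 'I_d) : exists q : rat, ratr q \in `]x ord0 i, (x ord0 i + e)%R[.
    by apply: rat_in_itvoo; rewrite ltrDl.
  pose p : C := ([ffun i => xchoose (ha i)], [ffun i => xchoose (hb i)]).
  exists (pickle p) => //; exists p; split; first by rewrite pickleK.
  - move=> y py; apply/eU/ball_rowP; split => // j.
    have /andP[py1 py2] := py j.
    have := xchooseP (ha j); have := xchooseP (hb j).
    rewrite !in_itv /= !ffunE /= in py1 py2 * => /andP[h1 h2] /andP[h3 h4].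
    rewrite ltr_norml; apply/andP; split; lra.
  - move=> j; have := xchooseP (ha j); have := xchooseP (hb j).
    rewrite !in_itv /= !ffunE /= => /andP[h1 h2] /andP[h3 h4].
    by rewrite (ltW h4) h1.
apply: caratheodory_measurable_bigcup => k.
case Ek: (unpickle k) => [p|]; last first.
  have -> : B k = set0 by apply/seteqP; split => x // [p []]; rewrite Ek.
  exact: caratheodory_measurable_set0.
have [pU|pU] := pselect (bx p `<=` U).
  have -> : B k = bx p.
    apply/seteqP; split => x; first by move=> [q []]; rewrite Ek => -[<-].
    by move=> px; exists p; split.
  exact: caratheodory_box.
have -> : B k = set0.
  by apply/seteqP; split => x // [q []]; rewrite Ek => -[<-].
exact: caratheodory_measurable_set0.
Qed.

Lemma hyperplane_box_null i c (a b : 'I_d -> R) :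
  lo ([set x : V | x ord0 i = c] `&` box a b) = 0.
Proof.
apply/eqP; rewrite eq_le lebesgue_outer_ge0 andbT; apply/lee_addgt0Pr => e e0.
rewrite add0e.
pose M := (\prod_(j < d | j != i) Num.max (b j - a j) 0)%R.
have M0 : (0 <= M)%R by apply: prodr_ge0 => j _; rewrite le_max lexx orbT.
pose eps := (e / (M + 1))%R.
have eps0 : (0 < eps)%R by apply: divr_gt0 => //; lra.
apply: (@le_trans _ _ (lo (box (set_coord a i c) (set_coord b i (c + eps))))).
  apply: le_lebesgue_outer => x [xc xab] j; rewrite /set_coord.
  by case: eqP => [->|_]; [rewrite xc lexx ltrDl|exact: xab].
apply: le_trans (lebesgue_outer_box_le _ _) _.
rewrite /box_vol lee_fin (bigD1 i) //= /set_coord eqxx.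
rewrite (eq_bigr (fun j => Num.max (b j - a j) 0)%R); last by move=> j /negbTE ->.
rewrite addrAC subrr add0r max_l ?ltW // -/M /eps mulrAC.
have : (M / (M + 1) < 1)%R by rewrite ltr_pdivrMr ?mul1r; lra.
rewrite -mulrA; nra.
Qed.

Lemma hyperplane_null i c : lo [set x : V | x ord0 i = c] = 0.
Proof.
apply/eqP; rewrite eq_le lebesgue_outer_ge0 andbT.
rewrite -(@lebesgue_outer_bigcup_null _ _ (fun m : nat =>
  [set x : V | x ord0 i = c] `&` box (fun=> - m%:R) (fun=> m%:R)))%R; last first.
  by move=> m; exact: hyperplane_box_null.
apply: le_lebesgue_outer => x xc.
have [m xm] := cube_cover 0 x; exists m => //; split => // j.
by have := cube_sub_box xm j; rewrite mxE sub0r add0r.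
Qed.

Lemma coord_hyperplanes_null (x0 : V) :
  lo [set x : V | exists i, x ord0 i = x0 ord0 i] = 0.
Proof.
apply/eqP; rewrite eq_le lebesgue_outer_ge0 andbT.
rewrite -(lebesgue_outer_bigcup_null
  (fun k => @hyperplane_null (inord k) (x0 ord0 (inord k)))).
by apply: le_lebesgue_outer => x [i xi]; exists (i : nat) => //=; rewrite inord_val.
Qed.

End PositiveDimension.

Section RectArithmetic.
Variable R : realFieldType.

Lemma rect_perturb_lt (p q c eta t e : R) : 0 <= eta <= 1 -> 0 <= t <= 1 ->
  t * `|p - c| <= e / 2 -> `|q - p| < e / 2 ->
  `|(eta + (1 - eta) * t) * q + (1 - (eta + (1 - eta) * t)) * c
    - (eta * p + (1 - eta) * c)| < e.
Proof.
move=> /andP[eta0 eta1] /andP[t0 t1] tpc qp.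
have -> : (eta + (1 - eta) * t) * q + (1 - (eta + (1 - eta) * t)) * c
    - (eta * p + (1 - eta) * c) = (eta + (1 - eta) * t) * (q - p) + (1 - eta) * (t * (p - c)).
  by ring.
apply: le_lt_trans (ler_normD _ _) _.
rewrite !normrM [`|eta + _|]ger0_norm; last by nra.
rewrite [`|1 - eta|]ger0_norm ?subr_ge0 // [`|t|]ger0_norm //.
have h1 : (eta + (1 - eta) * t) * `|q - p| <= `|q - p| by rewrite ler_piMl //; nra.
have h2 : (1 - eta) * (t * `|p - c|) <= t * `|p - c|.
  by rewrite ler_piMl ?mulr_ge0 //; lra.
lra.
Qed.

Lemma rect_inv_dist_lt (q c z eta r : R) : 0 < eta ->
  `|z - (eta * q + (1 - eta) * c)| < r * eta -> `|q - (c + (z - c) / eta)| < r.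
Proof.
move=> eta0 zr.
have -> : q - (c + (z - c) / eta) = - (z - (eta * q + (1 - eta) * c)) / eta.
  by field; rewrite gt_eqF.
have eta_inv0 : 0 < eta^-1 by rewrite invr_gt0.
by rewrite mulNr normrN normrM (gtr0_norm eta_inv0) ltr_pdivrMr.
Qed.

(* [u] and [v] lie on the same side of [0] as [a], and [|u| <= |v|]. *)
Lemma near_ratio_ge0_le1 (a u v r : R) : a != 0 -> 1 / 2 <= r < 1 ->
  `|v - a| < `|a| * (1 - r) / 2 -> `|u - a * r| < `|a| * (1 - r) / 2 ->
  v != 0 /\ 0 <= u / v <= 1.
Proof.
move=> a0 /andP[r1 r2]; rewrite !ltr_norml => /andP[h1 h2] /andP[h3 h4].
have [ap|an] := ltP 0 a.
  rewrite gtr0_norm // in h1 h2 h3 h4.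
  have v0 : 0 < v by nra.
  have uv : u < v by nra.
  have u0 : 0 < u by nra.
  split; first by rewrite gt_eqF.
  apply/andP; split; first by apply: divr_ge0; exact: ltW.
  by rewrite ler_pdivrMr // mul1r; exact: ltW.
have {an}an : a < 0 by rewrite lt_neqAle a0 an.
rewrite ltr0_norm // in h1 h2 h3 h4.
have v0 : v < 0 by nra.
have uv : v < u by nra.
have u0 : u < 0 by nra.
split; first by rewrite lt_eqF.
have Nv0 : 0 < - v by rewrite oppr_gt0.
rewrite -mulrNN -invrN.
apply/andP; split; first by apply: divr_ge0; rewrite oppr_ge0; exact: ltW.
by rewrite ler_pdivrMr // mul1r lerN2; exact: ltW.
Qed.

End RectArithmetic.

Section OUGeometry.
Variables (R : realType) (d : nat).
Local Notation V := 'rV[R]_d.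

Definition rect (x0 : V) (eta : 'I_d -> R) (x : V) : V :=
  \row_i (eta i * x ord0 i + (1 - eta i) * x0 ord0 i).

Lemma OU_cube (x0 : V) m : OU (cube x0 m) x0.
Proof.
move=> x xm eta eta01 i; rewrite mxE.
have -> : eta i * x ord0 i + (1 - eta i) * x0 ord0 i - x0 ord0 i =
  eta i * (x ord0 i - x0 ord0 i) by ring.
case/andP: (eta01 i) => eta0 eta1.
by rewrite normrM ger0_norm //; apply: le_lt_trans (xm i); rewrite ler_piMl.
Qed.

Lemma OU_setI (K L : set V) x0 : OU K x0 -> OU L x0 -> OU (K `&` L) x0.
Proof. by move=> OUK OUL x [Kx Lx] eta eta01; split; [exact: OUK|exact: OUL]. Qed.

Lemma closure_OU_of_pos (S : set V) x0 :
  (forall x eta, S x -> (forall i, 0 < eta i <= 1) -> S (rect x0 eta x)) ->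
  OU (closure S) x0.
Proof.
move=> Spos p clp eta eta01 B /nbhs_ballP [e e0 eB].
have e20 : 0 < e / 2 by apply: divr_gt0.
pose t i := Num.min 1 (e / 2 / (`|p ord0 i - x0 ord0 i| + 1)).
have t01 i : 0 < t i <= 1.
  by rewrite lt_min ltr01 ge_min lexx /= andbT divr_gt0.
have tp i : t i * `|p ord0 i - x0 ord0 i| <= e / 2.
  have pi1 : 0 < `|p ord0 i - x0 ord0 i| + 1 by rewrite ltr_wpDl.
  have : t i <= e / 2 / (`|p ord0 i - x0 ord0 i| + 1) by rewrite ge_min lexx orbT.
  by rewrite ler_pdivlMr // => ?; have := t01 i; nra.
pose eta' i := eta i + (1 - eta i) * t i.
have eta'01 i : 0 < eta' i <= 1.
  have /andP[eta0 eta1] := eta01 i; have /andP[t0 t1] := t01 i.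
  have : 0 <= eta i * (1 - t i) by rewrite mulr_ge0 ?subr_ge0.
  have : 0 <= (1 - eta i) * (1 - t i) by rewrite mulr_ge0 ?subr_ge0.
  by rewrite /eta'; lra.
have [q [Sq /ball_rowP[_ pq]]] := clp _ (nbhsx_ballx p _ e20).
exists (rect x0 eta' q); split; first exact: Spos.
apply/eB/ball_rowP; split => // j; rewrite !mxE distrC.
apply: rect_perturb_lt; [exact: eta01| |exact: tp|].
  by have /andP[/ltW -> ->] := t01 j.
by rewrite distrC; exact: pq.
Qed.

Lemma OU_closure (K : set V) x0 : OU K x0 -> OU (closure K) x0.
Proof.
move=> OUK; apply: closure_OU_of_pos => x eta Kx eta01; apply: OUK => // i.
by have /andP[/ltW -> ->] := eta01 i.
Qed.

Lemma interior_rect (K : set V) x0 q eta : OU K x0 -> interior K q ->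
  (forall i, 0 < eta i <= 1) -> interior K (rect x0 eta q).
Proof.
move=> OUK /nbhs_ballP [r r0 rK] eta01.
have reta i : 0 < r * eta i by rewrite mulr_gt0 //; case/andP: (eta01 i).
apply: filterS (near_row (rect x0 eta q) reta) => z zq.
pose w : V := \row_i (x0 ord0 i + (z ord0 i - x0 ord0 i) / eta i).
have Kw : K w.
  apply/rK/ball_rowP; split => // j; rewrite mxE.
  apply: rect_inv_dist_lt; first by case/andP: (eta01 j).
  by have := zq j; rewrite mxE.
have -> : z = rect x0 eta w.
  apply/rowP => j; rewrite !mxE; field.
  by case/andP: (eta01 j) => eta0 _; rewrite gt_eqF.
by apply: (OUK w Kw eta) => i; case/andP: (eta01 i) => /ltW -> ->.
Qed.

Lemma OU_closure_interior (K : set V) x0 : OU K x0 -> OU (closure (interior K)) x0.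
Proof. by move=> OUK; apply: closure_OU_of_pos => x eta; exact: interior_rect. Qed.

Lemma dilateK (c : V) (s : R) : s != 0 -> cancel (dilate c s^-1) (dilate c s).
Proof.
by move=> s0 x; rewrite /dilate addrAC subrr add0r scalerA mulfV // scale1r addrC subrK.
Qed.

(* The rectangle spanned by [x0] and a point [y] of [K] close to [p] contains
   a neighbourhood of [dilate x0 r p]. *)
Lemma interior_dilate_closure (K : set V) x0 p r : OU K x0 -> closure K p ->
  (forall i, p ord0 i != x0 ord0 i) -> 1 / 2 <= r < 1 -> interior K (dilate x0 r p).
Proof.
move=> OUK clp px r12.
pose del i := `|p ord0 i - x0 ord0 i| * (1 - r) / 2.
have del0 i : 0 < del i.
  rewrite divr_gt0 // mulr_gt0 ?normr_gt0 ?subr_eq0 ?px //.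
  by case/andP: r12 => _; rewrite subr_gt0.
have [y [Ky yp]] := clp _ (near_row p del0).
apply: filterS (near_row (dilate x0 r p) del0) => z zp.
have ratio i : y ord0 i - x0 ord0 i != 0 /\
    0 <= (z ord0 i - x0 ord0 i) / (y ord0 i - x0 ord0 i) <= 1.
  apply: (near_ratio_ge0_le1 (a := p ord0 i - x0 ord0 i) _ r12).
  - by rewrite subr_eq0.
  - by have := yp i; congr (`|_| < _); ring.
  - by have := zp i; rewrite !mxE; congr (`|_| < _); ring.
have -> : z = rect x0 (fun i => (z ord0 i - x0 ord0 i) / (y ord0 i - x0 ord0 i)) y.
  by apply/rowP => j; rewrite !mxE; field; case: (ratio j).
by apply: (OUK y Ky) => i; case: (ratio i).
Qed.

End OUGeometry.

Lemma closure_sub_dilate_interior (R : realType) (d : nat) (L : set 'rV[R]_d) x0 s :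
  OU L x0 -> 1 < s <= 2 ->
  closure L `<=` dilate x0 s @` interior L `|` [set x | exists i, x ord0 i = x0 ord0 i].
Proof.
move=> OUL /andP[s1 s2] p clp.
have [px|] := pselect (forall i, p ord0 i != x0 ord0 i); last first.
  by move=> /existsNP[i /negP/negbNE/eqP pi]; right; exists i.
have s0 : s != 0 by rewrite gt_eqF //; lra.
left; exists (dilate x0 s^-1 p); last exact: dilateK.
apply: interior_dilate_closure => //.
have sV0 : 0 < s^-1 by rewrite invr_gt0; lra.
have sVs : s^-1 * s = 1 by rewrite mulVf.
by apply/andP; split; nra.
Qed.

Section OUMeasure.
Variables (R : realType) (n : nat).
Local Notation d := n.+1.
Local Notation V := 'rV[R]_d.
Local Notation lo := (@lebesgue_outer R d).
Local Open Scope ereal_scope.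

Lemma lebesgue_outer_closure_le_dilate (L : set V) x0 (s : R) : OU L x0 -> (1 < s <= 2)%R ->
  lo (closure L) <= (s ^+ d)%:E * lo (interior L).
Proof.
move=> OUL s12; have s0 : (0 < s)%R by case/andP: s12 => s1 _; lra.
apply: le_trans (le_lebesgue_outer (closure_sub_dilate_interior OUL s12)) _.
apply: le_trans (lebesgue_outerU2 _ _) _.
by rewrite coord_hyperplanes_null adde0; exact: lebesgue_outer_dilate_le.
Qed.

Lemma lebesgue_outer_closure_le_interior (L : set V) x0 : OU L x0 ->
  lo (closure L) <= lo (interior L).
Proof.
move=> OUL; have := lebesgue_outer_ge0 (interior L).
case E : (lo (interior L)) => [c| |] // c0; last by rewrite leey.
apply/lee_addgt0Pr => e e0.
have cvg_c : ((s ^+ d * c)%R @[s --> (1%R : R)^'+] --> c)%classic.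
  have := @exprn_continuous R d 1%R; move=> /cvg_at_right_filter; rewrite /= expr1n => pow1.
  by rewrite -[X in _ --> X]mul1r; exact: cvgMl pow1.
have : \forall s \near (1%R : R)^'+, [/\ (1 < s)%R, (s <= 2)%R & (s ^+ d * c < c + e)%R].
  near=> s; split; near: s.
  - exact: nbhs_right_gt.
  - by apply: nbhs_right_le; lra.
  - by apply: (cvgr_lt _ cvg_c); rewrite ltrDl; exact: e0.
case/filter_ex => s [s1 s2 sc].
have s12 : (1 < s <= 2)%R by apply/andP.
apply: le_trans (lebesgue_outer_closure_le_dilate OUL s12) _.
by rewrite E -EFinM lee_fin ltW.
Unshelve. all: by end_near.
Qed.

Lemma lebesgue_outer_cube_lt (c : V) m : lo (cube c m) < +oo.
Proof.
apply: le_lt_trans (le_lebesgue_outer (@cube_sub_box _ _ c m)) _.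
by apply: le_lt_trans (lebesgue_outer_box_le _ _) _; exact: ltey.
Qed.

Lemma OU_setD_interior_null (K : set V) x0 : OU K x0 -> lo (K `\` interior K) = 0.
Proof.
move=> OUK; apply/eqP; rewrite eq_le lebesgue_outer_ge0 andbT.
rewrite -(@lebesgue_outer_bigcup_null _ _
  (fun m => closure (K `&` cube x0 m) `\` interior (K `&` cube x0 m))); last first.
  move=> m; set L := K `&` cube x0 m.
  have OUL : OU L x0 by apply: OU_setI => //; exact: OU_cube.
  have int_cl : closure L `&` interior L = interior L.
    by apply/setIidr => x /interior_subset /subset_closure.
  have int_fin : lo (interior L) \is a fin_num.
    rewrite ge0_fin_numE ?lebesgue_outer_ge0 //.
    apply: le_lt_trans (lebesgue_outer_cube_lt x0 m.+1).
    apply: le_lebesgue_outer => x /interior_subset/subset_closure clx.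
    by apply: closure_cube; exact: (closureS (@subIsetr _ K _)).
  have cara := caratheodory_open (@open_interior _ L) (closure L).
  rewrite int_cl setDE in cara *.
  apply/eqP; rewrite eq_le lebesgue_outer_ge0 andbT -(leeD2lE _ _ int_fin) adde0 -cara.
  exact: lebesgue_outer_closure_le_interior OUL.
apply: le_lebesgue_outer => x [Kx Kix]; have [m xm] := cube_cover x0 x.
exists m => //; split; first by apply: subset_closure; split.
by move=> h; apply: Kix; apply: (interiorS (@subIsetl _ K (cube x0 m))).
Qed.

Lemma OU_measurable (K : set V) x0 : OU K x0 -> lebesgue_measurable K.
Proof.
move=> OUK; have -> : K = interior K `|` (K `\` interior K).
  apply/seteqP; split => [x Kx|x [/interior_subset//|[]//]].
  by have [|] := pselect (interior K x); [left|right].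
apply: caratheodory_measurable_setU; first exact/caratheodory_open/open_interior.
exact/caratheodory_null/OU_setD_interior_null/OUK.
Qed.

End OUMeasure.

Lemma OU_lebesgue_outer_interior_closure (R : realType) (n : nat) (K : set 'rV[R]_n.+1) x0 :
  OU K x0 -> lebesgue_outer (interior K) = lebesgue_outer K /\
             lebesgue_outer K = lebesgue_outer (closure K).
Proof.
move=> OUK; have int_le := le_lebesgue_outer (@interior_subset _ K).
have cl_ge := le_lebesgue_outer (@subset_closure _ K).
have cl_le := lebesgue_outer_closure_le_interior OUK.
split; apply/le_anti.
- by rewrite int_le (le_trans cl_ge cl_le).
- by rewrite cl_ge (le_trans cl_le int_le).
Qed.

Lemma eseries1_pinfty (R : realType) : (\sum_(k <oo) (1%:E : \bar R) = +oo)%E.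
Proof.
have : (0 <= \sum_(k <oo) (1%:E : \bar R))%E by apply: nneseries_ge0.
case E : (\sum_(k <oo) _)%E => [r| |] // _; exfalso.
have := @nneseries_lim_ge R (fun=> 1%:E) xpredT 0 (Num.trunc r).+1 (fun _ _ _ => lee01).
rewrite E sumEFin lee_fin big_const_nat iter_addr_0 subn0.
by have := truncnS_gt r; lra.
Qed.

(* In dimension 0 every box is the whole space and has volume [1] (an empty
   product), so every cover costs [+oo]. *)
Lemma lebesgue_outer_dim0 (R : realType) (A : set 'rV[R]_0) : lebesgue_outer A = +oo%E.
Proof.
apply/ereal_inf_pinfty => _ [a [b [_ ->]]].
by rewrite -(eseries1_pinfty R); apply: eq_eseriesr => k _; rewrite /box_vol big_ord0.
Qed.

Unset Implicit Arguments.

Theorem mainTheorem11 (R : realType) (d : nat) (K : set 'rV[R]_d) (x0 : 'rV[R]_d) :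
  OU K x0 ->
  [/\ lebesgue_measurable K,
      OU (closure K) x0,
      OU (closure (interior K)) x0,
      lebesgue_outer (interior K) = lebesgue_outer K &
      lebesgue_outer K = lebesgue_outer (closure K)].
Proof.
case: d K x0 => [|n] K x0 OUK.
  split; [|exact: OU_closure|exact: OU_closure_interior|..];
    by [move=> X; rewrite !lebesgue_outer_dim0|rewrite !lebesgue_outer_dim0].
have [int_eq cl_eq] := OU_lebesgue_outer_interior_closure OUK.
split => //; [exact: OU_measurable OUK|exact: OU_closure|exact: OU_closure_interior].
Qed.
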